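(* Let $(\mathfrak{A},\mathfrak{A}_0)$ be a *-semisimple CQ*-algebra as in the context and let $X\in\mathfrak{A}$ with $X=X^*$. Then every generalized eigenvalue of $X$ is real.
   Context: Let $\mathfrak{A}_0$ be a unital C*-algebra with C*-norm $\|\cdot\|_0$ and unit $I$, and $\|\cdot\|$ another norm on $\mathfrak{A}_0$ with $\|A\|\le\|A\|_0$, $\|AB\|\le\|A\|\,\|B\|_0$, $\|A^*\|=\|A\|$. $\mathfrak{A}$ is the $\|\cdot\|$-completion of $\mathfrak{A}_0$, with $XA,AX,X^*$ ($X\in\mathfrak{A},A\in\mathfrak{A}_0$) defined as $\|\cdot\|$-limits of $A_nA$, $AA_n$, $A_n^*$ for $A_n\in\mathfrak{A}_0$, $A_n\to X$. $\mathcal{P}_{\mathfrak{A}_0}(\mathfrak{A})$ is the set of sesquilinear forms $\varphi$ on $\mathfrak{A}\times\mathfrak{A}$ with $\varphi(X,X)\ge0$, $\varphi(XA,B)=\varphi(A,X^*B)$ for $X\in\mathfrak{A}$, $A,B\in\mathfrak{A}_0$, and $|\varphi(X,Y)|\le\gamma\|X\|\|Y\|$ for some $\gamma>0$; $\mathcal{S}_{\mathfrak{A}_0}(\mathfrak{A})$ is the subset with $\gamma\le1$. *-semisimple: for every $X\ne0$ there is $\varphi\in\mathcal{S}_{\mathfrak{A}_0}(\mathfrak{A})$ with $\varphi(X,X)>0$. A complex number $\alpha$ is a generalized eigenvalue of $X\in\mathfrak{A}$ if there exist a nonzero $\varphi\in\mathcal{P}_{\mathfrak{A}_0}(\mathfrak{A})$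 and $A\in\mathfrak{A}_0$ with $\varphi(A,A)>0$ and $\varphi(XA-\alpha A,B)=0$ for all $B\in\mathfrak{A}_0$. *)

(* complex numbers are R[i] (mathcomp-real-closed) over an
   abstract real field R : realType (i.e. R is the reals, R[i] is C). *)
From HB Require Import structures.
From mathcomp Require Import all_boot all_order all_algebra.
From mathcomp Require Import reals.
From mathcomp Require Import complex.
Set Implicit Arguments. Unset Strict Implicit. Unset Printing Implicit Defensive.
Import Order.TTheory GRing.Theory Num.Theory.
Local Open Scope ring_scope.

Definition cabs (R : realType) (c : R[i]) : R := ComplexField.Normc.normc c.

Definition cR (R : realType) (r : R) : R[i] := (r%:C)%C.

Definition is_norm (R : realType) (V : lmodType R[i]) (n : V -> R) : Prop :=
  [/\ forall x, 0 <= n x,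
      forall x, n x = 0 -> x = 0,
      forall (c : R[i]) x, n (c *: x) = cabs c * n x &
      forall x y, n (x + y) <= n x + n y].

Definition cvg_to (R : realType) (V : lmodType R[i]) (n : V -> R)
  (u : nat -> V) (x : V) : Prop :=
  forall e : R, 0 < e -> exists N : nat, forall k, (N <= k)%N -> n (u k - x) < e.

Definition cauchy_seq (R : realType) (V : lmodType R[i]) (n : V -> R)
  (u : nat -> V) : Prop :=
  forall e : R, 0 < e -> exists N : nat, forall k l, (N <= k)%N -> (N <= l)%N ->
    n (u k - u l) < e.

Definition complete_wrt (R : realType) (V : lmodType R[i]) (n : V -> R) : Prop :=
  forall u, cauchy_seq n u -> exists x, cvg_to n u x.

Definition is_unital_Cstar_algebra (R : realType) (A0 : algType R[i])
  (star : A0 -> A0) (n0 : A0 -> R) : Prop :=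
  [/\ is_norm n0, complete_wrt n0,
      [/\ forall a, star (star a) = a,
          forall a b, star (a + b) = star a + star b,
          forall (c : R[i]) a, star (c *: a) = c^* *: star a &
          forall a b, star (a * b) = star b * star a],
      forall a b, n0 (a * b) <= n0 a * n0 b &
      forall a, n0 (star a * a) = n0 a ^+ 2].

(* the whole standing setup of the context:
   - (A0, star, n0) unital C*-algebra;
   - n another norm on A0 with n <= n0, n(ab) <= n(a) n0(b), n(a* ) = n(a);
   - (A, nA) is the n-completion of A0 via the isometric linear embedding iota
     (A complete, iota(A0) dense);
   - mulXA X a = XA, mulAX a X = AX, starA X = X* are the n-limits of
     a_n a, a a_n, a_n* for a_n in A0 with a_n -> X. *)
Definition CQ_setup (R : realType) (A0 : algType R[i]) (star : A0 -> A0)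
  (n0 n : A0 -> R) (A : lmodType R[i]) (iota : A0 -> A) (nA : A -> R)
  (mulXA : A -> A0 -> A) (mulAX : A0 -> A -> A) (starA : A -> A) : Prop :=
  [/\ is_unital_Cstar_algebra star n0,
      [/\ is_norm n, forall a, n a <= n0 a,
          forall a b, n (a * b) <= n a * n0 b &
          forall a, n (star a) = n a],
      [/\ is_norm nA /\ complete_wrt nA,
          forall a b, iota (a + b) = iota a + iota b,
          forall (c : R[i]) a, iota (c *: a) = c *: iota a,
          forall a, nA (iota a) = n a &
          forall (X : A) (e : R), 0 < e -> exists a, nA (X - iota a) < e] &
      forall (X : A) (u : nat -> A0), cvg_to nA (fun k => iota (u k)) X ->
        [/\ forall a, cvg_to nA (fun k => iota (u k * a)) (mulXA X a),
            forall a, cvg_to nA (fun k => iota (a * u k)) (mulAX a X) &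
            cvg_to nA (fun k => iota (star (u k))) (starA X)]].

Definition sesquilinear (R : realType) (A : lmodType R[i]) (phi : A -> A -> R[i])
  : Prop :=
  (forall (c : R[i]) x y z, phi (c *: x + y) z = c * phi x z + phi y z) /\
  (forall (c : R[i]) x y z, phi x (c *: y + z) = c^* * phi x y + phi x z).

Definition in_PA (R : realType) (A0 : algType R[i]) (A : lmodType R[i])
  (iota : A0 -> A) (nA : A -> R) (mulXA : A -> A0 -> A) (starA : A -> A)
  (phi : A -> A -> R[i]) : Prop :=
  [/\ sesquilinear phi,
      forall X, 0 <= phi X X,
      forall X a b, phi (mulXA X a) (iota b) = phi (iota a) (mulXA (starA X) b) &
      exists2 gam : R, 0 < gam &
        forall X Y, cabs (phi X Y) <= gam * nA X * nA Y].

Definition in_SA (R : realType) (A0 : algType R[i]) (A : lmodType R[i])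
  (iota : A0 -> A) (nA : A -> R) (mulXA : A -> A0 -> A) (starA : A -> A)
  (phi : A -> A -> R[i]) : Prop :=
  [/\ sesquilinear phi,
      forall X, 0 <= phi X X,
      forall X a b, phi (mulXA X a) (iota b) = phi (iota a) (mulXA (starA X) b) &
      exists gam : R, [/\ 0 < gam, gam <= 1 &
        forall X Y, cabs (phi X Y) <= gam * nA X * nA Y]].

Definition star_semisimple (R : realType) (A0 : algType R[i]) (A : lmodType R[i])
  (iota : A0 -> A) (nA : A -> R) (mulXA : A -> A0 -> A) (starA : A -> A) : Prop :=
  forall X : A, X != 0 -> exists phi, in_SA iota nA mulXA starA phi /\ 0 < phi X X.

Definition gen_eigenvalue (R : realType) (A0 : algType R[i]) (A : lmodType R[i])
  (iota : A0 -> A) (nA : A -> R) (mulXA : A -> A0 -> A) (starA : A -> A)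
  (alpha : R[i]) (X : A) : Prop :=
  exists phi, exists a : A0,
    [/\ in_PA iota nA mulXA starA phi,
        (exists Y Z, phi Y Z != 0),
        0 < phi (iota a) (iota a) &
        forall b : A0, phi (mulXA X a - alpha *: iota a) (iota b) = 0].

(* Taking B = A in the eigenvalue equation gives phi(XA, A) = alpha phi(A, A).
   Since X = X*, the invariance of phi yields phi(XA, A) = phi(A, XA), and a
   positive sesquilinear form is real on such a symmetric pair by polarization:
   2 phi(Y, Z) = phi(Y+Z, Y+Z) - phi(Y, Y) - phi(Z, Z).  Dividing by
   phi(A, A) > 0 shows that alpha is real. *)
From HB Require Import structures.
From mathcomp Require Import all_boot all_order all_algebra.
From mathcomp Require Import reals complex.
From mathcomp Require Import ring.
Set Implicit Arguments. Unset Strict Implicit. Unset Printing Implicit Defensive.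
Import Order.TTheory GRing.Theory Num.Theory.
Local Open Scope ring_scope.

Section PositiveSesquilinearForm.
Variables (R : realType) (V : lmodType R[i]) (phi : V -> V -> R[i]).
Hypothesis phi_sesquilinear : sesquilinear phi.

Lemma sesquilinear_addl x y z : phi (x + y) z = phi x z + phi y z.
Proof. by have := phi_sesquilinear.1 1 x y z; rewrite scale1r mul1r. Qed.

Lemma sesquilinear_addr x y z : phi x (y + z) = phi x y + phi x z.
Proof. by have := phi_sesquilinear.2 1 x y z; rewrite scale1r rmorph1 mul1r. Qed.

Lemma sesquilinear_subZl c x y z : phi (x - c *: y) z = phi x z - c * phi y z.
Proof. by rewrite addrC -scaleNr phi_sesquilinear.1 mulNr addrC. Qed.

Hypothesis phi_ge0 : forall x, 0 <= phi x x.

Lemma sesquilinear_sym_real x y : phi x y = phi y x -> phi x y \is Num.real.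
Proof.
move=> sym_xy.
have polarization : phi x y *+ 2 = phi (x + y) (x + y) - phi x x - phi y y.
  by rewrite sesquilinear_addl !sesquilinear_addr -sym_xy; ring.
by rewrite -(realrMn _ (isT : 2 != 0)%N) polarization !rpredB ?ger0_real.
Qed.

End PositiveSesquilinearForm.

Theorem corollary4p16 (R : realType) (A0 : algType R[i]) (star : A0 -> A0)
  (n0 n : A0 -> R) (A : lmodType R[i]) (iota : A0 -> A) (nA : A -> R)
  (mulXA : A -> A0 -> A) (mulAX : A0 -> A -> A) (starA : A -> A) :
  CQ_setup star n0 n iota nA mulXA mulAX starA ->
  star_semisimple iota nA mulXA starA ->
  forall X : A, starA X = X ->
  forall alpha : R[i], gen_eigenvalue iota nA mulXA starA alpha X ->
  alpha \is Num.real.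
Proof.
move=> _ _ X selfadjX alpha [phi [a [[sesq phi_ge0 phi_inv _] _ phi_aa_gt0 eigen]]].
set Y := mulXA X a; set Z := iota a.
have YZ_sym : phi Y Z = phi Z Y by rewrite /Y phi_inv selfadjX.
have YZ_eq : phi Y Z = alpha * phi Z Z.
  by apply/eqP; rewrite -subr_eq0 -(sesquilinear_subZl sesq) eigen.
have -> : alpha = phi Y Z / phi Z Z by rewrite YZ_eq mulfK ?gt_eqF.
apply: realM; first exact: (sesquilinear_sym_real sesq phi_ge0 YZ_sym).
by rewrite realV gtr0_real.
Qed.
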